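(* Let $L$ be a subspace of $\bigwedge^kV$ and $1\leq i<j\leq n$. Then $N_{j\to i}L$ is monomial with respect to $e_j$, i.e. \[ N_{j\to i}L=\Big(N_{j\to i}L\cap\bigwedge^{k}V^{(j)}\Big)\oplus\Big(N_{j\to i}L\cap\big(e_{j}\wedge\bigwedge^{k-1}V^{(j)}\big)\Big). \]
   Context: $\mathbb{F}$ is a field (assumed throughout the paper, for expository purposes, to have characteristic not $2$), $V$ is an $n$-dimensional $\mathbb{F}$-vector space with a fixed basis $e_1,\dots,e_n$, and $\bigwedge V$ its exterior algebra. For $j\in[n]$, $V^{(j)}$ is the span of $\{e_h:h\neq j\}$, and $\bigwedge V^{(j)}$ is viewed as a subalgebra of $\bigwedge V$. Slow shift: for distinct $i,j\in[n]$ and nonzero $m\in\bigwedge^kV$, write uniquely $m=x+e_j\wedge y$ with $x\in\bigwedge^kV^{(j)}$, $y\in\bigwedge^{k-1}V^{(j)}$, and set $N_{j\to i}m=x+e_i\wedge y$ if this is nonzero, and $N_{j\to i}m=e_j\wedge y$ otherwise (the limit as $t\to0$ of the projective action of the linear map $e_j\mapsto e_i+te_j$ fixing the other $e_h$). For a subspace $L$ of $\bigwedge^kV$, $N_{j\to i}L$ is the span of $\{N_{j\to i}m:m\in L\setminus\{0\}\}$; it has the same dimension as $L$. *)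

From HB Require Import structures.
From mathcomp Require Import all_boot all_order all_algebra.
Set Implicit Arguments. Unset Strict Implicit. Unset Printing Implicit Defensive.
Import Order.TTheory GRing.Theory Num.Theory.
Local Open Scope ring_scope.

(* Exterior algebra  /\V  of V = F^n with basis e_0..e_{n-1} (indices 'I_n),
   represented by its coordinates in the standard basis e_S (S a subset of
   'I_n, e_S = e_{s_1} /\ ... /\ e_{s_r} with s_1 < ... < s_r). *)
Definition ext (F : fieldType) (n : nat) := {ffun {set 'I_n} -> F^o}.

Section Ext.
Variables (F : fieldType) (n : nat).

Definition eb (S : {set 'I_n}) : ext F n := [ffun T : {set 'I_n} => (T == S)%:R].

Definition sgn (i : 'I_n) (S : {set 'I_n}) : F :=
  (-1) ^+ #|[set t in S | (t < i)%N]|.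

(* left multiplication by e_i : m |-> e_i /\ m *)
Definition wedge_e (i : 'I_n) (m : ext F n) : ext F n :=
  [ffun T : {set 'I_n} => if i \in T then sgn i (T :\ i) * m (T :\ i) else 0].

Definition wedgek (k : nat) : {vspace ext F n} :=
  <<[seq eb X | X <- enum [pred X : {set 'I_n} | #|X| == k]]>>%VS.

Definition wedgek_off (k : nat) (j : 'I_n) : {vspace ext F n} :=
  <<[seq eb X | X <- enum [pred X : {set 'I_n} | (#|X| == k) && (j \notin X)]]>>%VS.

(* e_j /\ (/\^{k-1} V^(j))  (zero when k = 0) *)
Definition wedgek_on (k : nat) (j : 'I_n) : {vspace ext F n} :=
  <<[seq wedge_e j (eb X) |
     X <- enum [pred X : {set 'I_n} | (#|X|.+1 == k) && (j \notin X)]]>>%VS.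

(* decomposition m = x + e_j /\ y with x, y free of e_j *)
Definition xpart (j : 'I_n) (m : ext F n) : ext F n :=
  [ffun S : {set 'I_n} => if j \in S then 0 else m S].
Definition ypart (j : 'I_n) (m : ext F n) : ext F n :=
  [ffun S : {set 'I_n} => if j \in S then 0 else sgn j S * m (j |: S)].

Definition slow_shift (j i : 'I_n) (m : ext F n) : ext F n :=
  let x := xpart j m in let y := ypart j m in
  if x + wedge_e i y != 0 then x + wedge_e i y else wedge_e j y.

Definition in_shifted (j i : 'I_n) (L : {vspace ext F n}) (v : ext F n) : Prop :=
  exists s : seq (ext F n),
    (forall w, w \in s -> exists2 m, (m \in L) && (m != 0) & w = slow_shift j i m)
    /\ v \in <<s>>%VS.

End Ext.

From HB Require Import structures.
From mathcomp Require Import all_boot all_order all_algebra.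
Import GRing.Theory.
Set Implicit Arguments. Unset Strict Implicit. Unset Printing Implicit Defensive.
Local Open Scope ring_scope.

(* Write m = x + e_j /\ y with x, y free of e_j.  Since i <> j, the element
   x + e_i /\ y is again free of e_j, so every slow shift N_{j->i} m of a
   homogeneous m lies either in /\^k V^(j) or in e_j /\ /\^{k-1} V^(j).  A
   spanning family of N_{j->i} L therefore splits into two subfamilies, one in
   each summand, and the two summands meet trivially because their elements
   are supported on basis vectors e_T with j \notin T, resp. j \in T. *)

Section Support.
Variables (F : fieldType) (n : nat).
Implicit Types (P : pred {set 'I_n}) (v w : ext F n) (s : seq (ext F n)).

Lemma span_support P s v :
  {in s, forall w, {subset support w <= P}} ->
  v \in <<s>>%VS -> {subset support v <= P}.
Proof.
move=> suppP vs T; apply: contraTT => PTn; rewrite inE negbK.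
rewrite (coord_span (X := in_tuple s) vs) sum_ffunE big1 // => l _; rewrite ffunE.
have /(_ T) : {subset support (in_tuple s)`_l <= P}.
  by apply: suppP; rewrite mem_nth.
by rewrite inE => /contraNN/(_ PTn); rewrite negbK => /eqP->; rewrite scaler0.
Qed.

Lemma support_subset_eq0 P v T : {subset support v <= P} -> ~~ P T -> v T = 0.
Proof. by move=> suppP; apply: contraNeq => /suppP. Qed.

Lemma sum_eb_support P v :
  {subset support v <= P} -> v = \sum_(T | P T) v T *: eb F T.
Proof.
move=> suppP; apply/ffunP => T; rewrite sum_ffunE.
under eq_bigr do rewrite !ffunE.
change (v T = \sum_(S | P S) v S * (T == S)%:R).
have [PT | PTn] := boolP (P T).
  rewrite (bigD1 T) //= eqxx mulr1 big1 ?addr0 // => S /andP[_ /negbTE].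
  by rewrite eq_sym => ->; rewrite mulr0.
have /eqP-> : v T == 0 by apply: contraNT PTn => /suppP.
rewrite big1 // => S PS; rewrite (_ : T == S = false) ?mulr0 //.
by apply: contraNF PTn => /eqP->.
Qed.

End Support.

Lemma span_filterC (K : fieldType) (vT : vectType K) (p : pred vT) (s : seq vT) :
  (<<s>> = <<filter p s>> + <<filter (predC p) s>>)%VS.
Proof.
by rewrite -span_cat; apply: eq_span => v; rewrite mem_cat !mem_filter /= -andb_orl orbN.
Qed.

Section Wedge.
Variables (F : fieldType) (n : nat).
Implicit Types (i j : 'I_n) (S T X : {set 'I_n}) (m v : ext F n).

Fact wedge_e_is_semilinear i : semilinear (@wedge_e F n i).
Proof.
split=> [c m | m1 m2]; apply/ffunP => T; rewrite !ffunE; case: ifP => _.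
- by rewrite /GRing.scale /= mulrCA.
- by rewrite /GRing.scale /= mulr0.
- by rewrite mulrDr.
- by rewrite addr0.
Qed.
HB.instance Definition _ i :=
  GRing.isSemilinear.Build F (ext F n) (ext F n) _ (@wedge_e F n i)
    (wedge_e_is_semilinear i).

Lemma xpart_add_wedge_ypart j m : xpart j m + wedge_e j (ypart j m) = m.
Proof.
apply/ffunP => T; rewrite !ffunE; case: ifP => jT; last by rewrite addr0.
by rewrite add0r setD11 mulrA /sgn -exprMn mulrNN mulr1 expr1n mul1r setD1K.
Qed.

Lemma support_eb S : {subset support (eb F S) <= pred1 S}.
Proof. by move=> T; rewrite !inE ffunE; apply: contraNT => /negbTE->. Qed.

Lemma support_wedge_e_eb j X :
  {subset support (wedge_e j (eb F X)) <=
           [pred T : {set 'I_n} | (j \in T) && (T :\ j == X)]}.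
Proof.
move=> T; rewrite !inE !ffunE; case: (j \in T) => /=; last by rewrite eqxx.
by apply: contraNT => /negbTE->; rewrite mulr0.
Qed.

Lemma wedgek_support k m :
  m \in wedgek F n k -> {subset support m <= [pred T : {set 'I_n} | #|T| == k]}.
Proof.
move/span_support; apply=> w /mapP[X]; rewrite mem_enum => /eqP kX -> T.
by move/support_eb; rewrite !inE => /eqP->; rewrite kX.
Qed.

Lemma wedgek_offP k j v :
  v \in wedgek_off F k j <->
  {subset support v <= [pred T : {set 'I_n} | (#|T| == k) && (j \notin T)]}.
Proof.
split.
  move/span_support; apply=> w /mapP[X]; rewrite mem_enum => kjX -> T.
  by move/support_eb; rewrite inE => /eqP->.
move/sum_eb_support->; apply: rpred_sum => T kjT; apply/rpredZ/memv_span.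
by apply/mapP; exists T; rewrite ?mem_enum.
Qed.

Lemma wedgek_onP k j v :
  v \in wedgek_on F k j <->
  {subset support v <= [pred T : {set 'I_n} | (#|T| == k) && (j \in T)]}.
Proof.
split.
  move/span_support; apply=> w /mapP[X]; rewrite mem_enum => /andP[/eqP kX jX] -> T.
  move/support_wedge_e_eb; rewrite !inE => /andP[jT /eqP XE].
  by rewrite jT andbT -kX -XE (cardsD1 j T) jT.
move=> suppv; rewrite -(xpart_add_wedge_ypart j v).
have -> : xpart j v = 0.
  apply/ffunP => T; rewrite !ffunE; case: ifP => // jT.
  by apply: (support_subset_eq0 suppv); rewrite inE jT andbF.
have suppy : {subset support (ypart j v) <=
                [pred X : {set 'I_n} | (#|X|.+1 == k) && (j \notin X)]}.
  move=> X; rewrite !inE ffunE; case: ifP => [|jX]; first by rewrite eqxx.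
  apply: contraNT; rewrite andbT => kX; apply/eqP.
  rewrite (support_subset_eq0 suppv) ?mulr0 //.
  by rewrite inE cardsU1 jX setU11 andbT.
rewrite add0r (sum_eb_support suppy) linear_sum; apply: rpred_sum => X kjX.
by rewrite linearZ; apply/rpredZ/memv_span/mapP; exists X; rewrite ?mem_enum.
Qed.

Lemma wedgek_off_on_eq0 k j v :
  v \in wedgek_off F k j -> v \in wedgek_on F k j -> v = 0.
Proof.
move=> /wedgek_offP suppoff /wedgek_onP suppon; apply/ffunP => T; rewrite ffunE.
have [jT | jTn] := boolP (j \in T).
  by apply: (support_subset_eq0 suppoff); rewrite inE jT andbF.
by apply: (support_subset_eq0 suppon); rewrite inE (negbTE jTn) andbF.
Qed.

Lemma slow_shift_wedgek_off_or_on k i j m :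
  i != j -> m \in wedgek F n k ->
  slow_shift j i m \in wedgek_off F k j \/ slow_shift j i m \in wedgek_on F k j.
Proof.
move=> ij /wedgek_support suppm; rewrite /slow_shift; case: ifP => _; [left | right].
  apply/wedgek_offP => T; apply: contraNT; rewrite !inE !ffunE.
  case jT: (j \in T) => /=.
    rewrite add0r; case: ifP => // iT.
    by rewrite in_setD1 (eq_sym j) ij jT mulr0.
  rewrite andbT => kT; rewrite (support_subset_eq0 suppm) // add0r.
  case: ifP => // iT; rewrite in_setD1 jT andbF (support_subset_eq0 suppm) ?mulr0 //.
  by rewrite inE cardsU1 in_setD1 jT andbF add1n; rewrite (cardsD1 i T) iT in kT.
apply/wedgek_onP => T; apply: contraNT; rewrite !inE !ffunE.
case: ifP => // jT; rewrite andbT => kT.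
by rewrite setD11 setD1K // (support_subset_eq0 suppm) ?mulr0.
Qed.

End Wedge.

Section ShiftedSpan.
Variables (F : fieldType) (n k : nat) (i j : 'I_n) (L : {vspace ext F n}).

Lemma in_shiftedD a b :
  in_shifted j i L a -> in_shifted j i L b -> in_shifted j i L (a + b).
Proof.
case=> [s1 [shift1 a1]] [s2 [shift2 b2]]; exists (s1 ++ s2); split.
  by move=> w; rewrite mem_cat => /orP[/shift1 | /shift2].
by rewrite span_cat; apply: memv_add.
Qed.

Hypotheses (neq_ij : i != j) (Lk : (L <= wedgek F n k)%VS).

Lemma in_shifted_wedgek_off_on_decomp v :
  in_shifted j i L v ->
  exists a b, [/\ in_shifted j i L a /\ a \in wedgek_off F k j,
                  in_shifted j i L b /\ b \in wedgek_on F k j & v = a + b].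
Proof.
case=> s [shift_s]; set off := [pred w | w \in wedgek_off F k j].
rewrite (span_filterC off) => /memv_addP[a a_off [b b_on ->]].
have shifted_sub t : {subset t <= s} -> {in <<t>>%VS, forall w, in_shifted j i L w}.
  by move=> ts w wt; exists t; split=> // u /ts /shift_s.
exists a, b; split=> //; split.
- by apply: shifted_sub a_off => w; rewrite mem_filter => /andP[].
- by apply: subvP a_off; apply/span_subvP => w; rewrite mem_filter => /andP[].
- by apply: shifted_sub b_on => w; rewrite mem_filter => /andP[].
apply: subvP b_on; apply/span_subvP => w.
rewrite mem_filter !inE => /andP[w_notoff /shift_s[m /andP[Lm _] w_def]].
move: w_notoff; rewrite w_def.
by case: (slow_shift_wedgek_off_or_on neq_ij (subvP Lk m Lm)) => ->.
Qed.

End ShiftedSpan.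

Theorem lemma3p3 (F : fieldType) (n k : nat) (L : {vspace ext F n})
    (i j : 'I_n) :
  (2%:R != 0 :> F) ->
  (L <= wedgek F n k)%VS ->
  (i < j)%N ->
  (forall v : ext F n,
     in_shifted j i L v <->
     exists a b : ext F n,
       [/\ in_shifted j i L a /\ a \in wedgek_off F k j,
           in_shifted j i L b /\ b \in wedgek_on F k j &
           v = a + b])
  /\ (forall v : ext F n,
        in_shifted j i L v -> v \in wedgek_off F k j -> v \in wedgek_on F k j ->
        v = 0).
Proof.
move=> _ Lk lt_ij; have neq_ij : i != j by rewrite neq_ltn lt_ij.
split=> [v | v _]; last exact: wedgek_off_on_eq0.
split; first exact: in_shifted_wedgek_off_on_decomp.
by case=> a [b [[a_sh _] [b_sh _] ->]]; apply: in_shiftedD.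
Qed.
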